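(* For every temporal oriented tree $\mathcal T$, the connectivity graph $G$ of $\mathcal T$ contains no anti-hole, i.e., no induced subgraph isomorphic to the complement of a cycle of length at least $5$.
   Context: A temporal digraph is a pair $(D,\lambda)$ with $D=(V,A)$ a finite digraph and $\lambda:A\to 2^{\{1,\dots,t_{\max}\}}$ giving the time-steps at which each arc is active. A temporal oriented tree $\mathcal T=(T,\lambda)$ is one whose underlying digraph $T$ is an orientation of a tree. A temporal path is a sequence $(v_1,v_2,t_1),\dots,(v_{k-1},v_k,t_{k-1})$ with pairwise distinct $v_i$, $\overrightarrow{v_iv_{i+1}}\in A$, $t_i\in\lambda(\overrightarrow{v_iv_{i+1}})$ and $t_1<\dots<t_{k-1}$. Two vertices $u\ne v$ are temporally connected if there is a temporal path from $u$ to $v$ or from $v$ to $u$. The connectivity graph of $\mathcal T$ is the undirected graph $G$ with $V(G)=V(T)$ and $uv\in E(G)$ iff $u\neq v$ and $u,v$ are temporally connected. *)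

From mathcomp Require Import all_boot.
Set Implicit Arguments. Unset Strict Implicit. Unset Printing Implicit Defensive.

(* A digraph on a finite vertex type V is given by its arc relation A.
   Time labels: lam u v t means t is in lambda(arc uv). *)

Definition und_adj (V : finType) (A : rel V) : rel V := fun u v => A u v || A v u.

Definition oriented_tree (V : finType) (A : rel V) : Prop :=
  [/\ (forall u, ~~ A u u),
      (forall u v, A u v -> ~~ A v u),
      0 < #|V|,
      (forall u v, connect (und_adj A) u v)
    & (forall c : seq V, uniq c -> 2 < size c -> ~~ cycle (und_adj A) c)].

Definition temporal_labelling (V : finType) (tmax : nat) (lam : V -> V -> nat -> bool) : Prop :=
  forall u v t, lam u v t -> (1 <= t <= tmax).

(* A temporal path from u to v: vertices u = v_1, v_2 = vs_0, ..., v_k = last,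
   pairwise distinct, each (v_i, v_{i+1}) an arc active at time t_i,
   with t_1 < ... < t_{k-1}. *)
Definition temporal_path (V : finType) (A : rel V) (lam : V -> V -> nat -> bool)
    (u v : V) : Prop :=
  exists (vs : seq V) (ts : seq nat),
    [/\ size ts = size vs,
        uniq (u :: vs),
        last u vs = v,
        sorted ltn ts
      & forall i, i < size vs ->
          A (nth u (u :: vs) i) (nth u vs i) &&
          lam (nth u (u :: vs) i) (nth u vs i) (nth 0 ts i)].

Definition conn_edge (V : finType) (A : rel V) (lam : V -> V -> nat -> bool)
    (u v : V) : Prop :=
  u != v /\ (temporal_path A lam u v \/ temporal_path A lam v u).

Definition cycle_adj (k : nat) (i j : 'I_k) : bool :=
  (j == (i.+1 %% k) :> nat) || (i == (j.+1 %% k) :> nat).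

Definition has_induced_anticycle (V : finType) (E : V -> V -> Prop) (k : nat) : Prop :=
  exists f : 'I_k -> V, injective f /\
    forall i j : 'I_k, i != j -> (E (f i) (f j) <-> ~~ cycle_adj i j).

From mathcomp Require Import all_boot.
From mathcomp Require Import zify.
Set Implicit Arguments. Unset Strict Implicit. Unset Printing Implicit Defensive.

(* In an oriented tree a temporal path entering and then leaving a vertex y uses two
   different tree edges at y, so if x reaches y and y reaches z then y separates x
   from z; and a temporal path between two vertices separated by y passes through y,
   so a connectivity edge ab with a not adjacent to y in G cannot be separated by y.
   In the complement of a cycle of length at least 5, the two non-neighbours U, W of
   a vertex Y are adjacent, and for any neighbours X, Z of Y one may pick U ~ Z and
   W ~ X; then X, W, U, Z stay connected in the tree minus Y, so X and Z are on the
   same side of Y: Y reaches all its neighbours or is reached by all of them. As each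
   edge of G is traversed in exactly one direction, this 2-colours G, which is
   impossible because 0, 2, 4, 1, 3 is a 5-cycle of G. *)

Section TemporalPaths.
Variables (V : finType) (A : rel V) (lam : V -> V -> nat -> bool).

Definition is_temporal_path (a b : V) (vs : seq V) (ts : seq nat) : Prop :=
  [/\ size ts = size vs, uniq (a :: vs), last a vs = b, sorted ltn ts
    & forall i, i < size vs ->
        A (nth a (a :: vs) i) (nth a vs i) &&
        lam (nth a (a :: vs) i) (nth a vs i) (nth 0 ts i)].

Definition avoid_adj (y : V) : rel V := fun u v => [&& und_adj A u v, u != y & v != y].

Definition separates (y a b : V) : bool := ~~ connect (avoid_adj y) a b.

Lemma avoid_adj_sym y : symmetric (avoid_adj y).
Proof. by move=> u v; rewrite /avoid_adj /und_adj orbC (andbC (u != y)). Qed.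

Lemma separates_sym y a b : separates y a b = separates y b a.
Proof. by rewrite /separates (sym_connect_sym (avoid_adj_sym y)). Qed.

Lemma last_take_nth (a : V) vs p : p < size vs -> last a (take p.+1 vs) = nth a vs p.
Proof.
move=> hp; rewrite (last_nth a) size_take.
have -> : (if p.+1 < size vs then p.+1 else size vs) = p.+1 by case: ifP => //; lia.
by rewrite /= nth_take.
Qed.

Lemma is_temporal_path_take a b vs ts p : is_temporal_path a b vs ts -> p < size vs ->
  is_temporal_path a (nth a vs p) (take p.+1 vs) (take p.+1 ts).
Proof.
case=> hs hu _ hso hn hp; split.
- by rewrite !size_take hs.
- exact: (take_uniq p.+2 hu).
- exact: last_take_nth.
- by apply: (subseq_sorted _ (take_subseq _ _) hso); exact: ltn_trans.
move=> i hi; have [hip hiv] : i < p.+1 /\ i < size vs.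
  by move: hi; rewrite size_take; case: ifP; lia.
rewrite (_ : a :: take p.+1 vs = take p.+2 (a :: vs)) // !nth_take //; last by lia.
exact: hn.
Qed.

Lemma is_temporal_path_drop a b vs ts p : is_temporal_path a b vs ts -> p < size vs ->
  is_temporal_path (nth a vs p) b (drop p.+1 vs) (drop p.+1 ts).
Proof.
case=> hs hu hl hso hn hp; split.
- by rewrite !size_drop hs.
- by rewrite -drop_nth //; apply: drop_uniq; case/andP: hu.
- by rewrite -(last_take_nth a hp) -last_cat cat_take_drop.
- by apply: (subseq_sorted _ (drop_subseq _ _) hso); exact: ltn_trans.
move=> i; rewrite size_drop => hi.
rewrite -drop_nth // !nth_drop.
have := hn (p.+1 + i) ltac:(lia).
rewrite addSn /= -addSn.
by rewrite !(set_nth_default a (nth a vs p)) //; lia.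
Qed.

Lemma temporal_path_path a b : temporal_path A lam a b ->
  exists vs, [/\ path A a vs, uniq (a :: vs) & last a vs = b].
Proof.
case=> vs [ts [_ hu hl _ hn]]; exists vs; split=> //.
by apply/(pathP a) => i /hn /andP[].
Qed.

Lemma path_avoid_adj y x s : path A x s -> y \notin x :: s -> path (avoid_adj y) x s.
Proof.
elim: s x => //= z s IH x /andP[hxz hp].
rewrite !inE !negb_or => /andP[hx /andP[hz hs]].
rewrite /avoid_adj /und_adj hxz eq_sym hx eq_sym hz /=.
by apply: IH; rewrite // inE negb_or hz.
Qed.

Lemma avoid_adj_path_notin y x s : path (avoid_adj y) x s -> y \notin s.
Proof.
elim: s x => //= z s IH x /andP[/and3P[_ _ hz] hp].
by rewrite inE negb_or eq_sym hz (IH z).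
Qed.

Lemma temporal_path_separates a b y : temporal_path A lam a b -> y != a -> separates y a b ->
  temporal_path A lam a y /\ temporal_path A lam y b.
Proof.
case=> vs [ts htp] hya hsep.
case: (boolP (y \in vs)) => hy.
  have hp : index y vs < size vs by rewrite index_mem.
  have hny : nth a vs (index y vs) = y by rewrite nth_index.
  split; [exists (take (index y vs).+1 vs), (take (index y vs).+1 ts)
         |exists (drop (index y vs).+1 vs), (drop (index y vs).+1 ts)].
    by have := is_temporal_path_take htp hp; rewrite hny.
  by have := is_temporal_path_drop htp hp; rewrite hny.
case: htp => _ _ hl _ hn; case/negP: hsep; apply/connectP; exists vs => //.
apply: path_avoid_adj; last by rewrite inE negb_or hya.
by apply/(pathP a) => i /hn /andP[].
Qed.

Lemma conn_edge_sym u v : conn_edge A lam u v -> conn_edge A lam v u.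
Proof. by case=> huv h; split; [rewrite eq_sym|tauto]. Qed.

Lemma conn_edge_separates a b y : conn_edge A lam a b -> y != a -> y != b ->
  separates y a b -> conn_edge A lam a y.
Proof.
case=> hab [h|h] hya hyb hsep; split; rewrite 1?eq_sym //.
  by left; case: (temporal_path_separates h hya hsep).
by right; case: (temporal_path_separates h hyb); rewrite // separates_sym.
Qed.

Hypothesis A_asym : forall u v, A u v -> ~~ A v u.
Hypothesis A_acyclic : forall c : seq V, uniq c -> 2 < size c -> ~~ cycle (und_adj A) c.

(* The arc entering y and the arc leaving y have distinct other ends p, q, since
   the tree is oriented; a y-avoiding connection from x to z would join p and q
   into a cycle through y. *)
Lemma temporal_path_concat_separates x y z :
  temporal_path A lam x y -> temporal_path A lam y z -> x != y -> y != z ->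
  separates y x z.
Proof.
move=> /temporal_path_path [vs1 [hp1 hu1 hl1]] /temporal_path_path [vs2 [hp2 hu2 hl2]].
move=> hxy hyz.
apply/negP => hxz.
case/lastP: vs1 hp1 hu1 hl1 => [/= _ _ hl1|s1 y']; first by rewrite hl1 eqxx in hxy.
rewrite last_rcons => + + hl1; subst y'.
rewrite rcons_path -rcons_cons rcons_uniq => /andP[hp1 hAp] /andP[hyn _].
set p := last x s1 in hAp hyn.
case: vs2 hp2 hu2 hl2 => [/= _ _ hl2|q s2]; first by rewrite hl2 eqxx in hyz.
move=> /= /andP[hAq hp2] /andP[hyn2 _] hl2.
have hpy : p != y by apply: contraNneq hyn => <-; rewrite mem_last.
have hqy : q != y by apply: contraNneq hyn2 => ->; rewrite mem_head.
have hpq : p != q by apply: contraTneq hAq => <-; exact: A_asym.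
have cpx : connect (avoid_adj y) p x.
  rewrite (sym_connect_sym (avoid_adj_sym y)).
  by apply/connectP; exists s1 => //; apply: path_avoid_adj.
have cqz : connect (avoid_adj y) q z.
  by apply/connectP; exists s2 => //; apply: path_avoid_adj.
have : connect (avoid_adj y) p q.
  rewrite (sym_connect_sym (avoid_adj_sym y)) in cqz.
  exact: connect_trans cpx (connect_trans hxz cqz).
case/connectP => s hs hls; case/shortenP: hs hls => s' hs' hus' _ hls'.
have hys' := avoid_adj_path_notin hs'.
have hsz : 2 < size (y :: p :: s').
  by case: s' hls' {hs' hus' hys'} => [/= hq|//]; rewrite hq eqxx in hpq.
have huniq : uniq (y :: p :: s') by rewrite /= inE negb_or eq_sym hpy hys'.
case/negP: (A_acyclic huniq hsz).
rewrite /= rcons_path -hls' /und_adj hAp hAq !orbT andbT /=.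
by apply: sub_path hs' => u v /and3P[].
Qed.

Lemma temporal_path_asym x y :
  x != y -> temporal_path A lam x y -> ~ temporal_path A lam y x.
Proof.
move=> hxy hxtoy hytox.
have := temporal_path_concat_separates hxtoy hytox hxy.
by rewrite eq_sym /separates connect0 => /(_ hxy).
Qed.

Lemma conn_edge_connect a b y : conn_edge A lam a b -> ~ conn_edge A lam a y ->
  y != a -> y != b -> connect (avoid_adj y) a b.
Proof. by move=> hab nay hya hyb; apply: contra_notT nay; apply: conn_edge_separates. Qed.

(* Going from Y through Z would make Y separate X from Z, yet X, W, U, Z is a
   chain of connectivity edges each of whose ends are joined avoiding Y. *)
Lemma temporal_path_step_imp X Y Z U W :
  conn_edge A lam X Y -> conn_edge A lam Z Y -> conn_edge A lam U Z ->
  conn_edge A lam W X -> conn_edge A lam U W ->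
  ~ conn_edge A lam U Y -> ~ conn_edge A lam W Y -> Y != U -> Y != W ->
  temporal_path A lam X Y -> temporal_path A lam Z Y.
Proof.
move=> [hXY _] [hZY [//|hYtoZ]] hUZ hWX hUW nUY nWY hYU hYW hXtoY.
have hYX : Y != X by rewrite eq_sym.
have hYZ : Y != Z by rewrite eq_sym.
case/negP: (temporal_path_concat_separates hXtoY hYtoZ hXY hYZ).
have sym := sym_connect_sym (avoid_adj_sym Y).
have cXW : connect (avoid_adj Y) X W by rewrite sym; apply: conn_edge_connect.
have cWU : connect (avoid_adj Y) W U by rewrite sym; apply: conn_edge_connect.
have cUZ : connect (avoid_adj Y) U Z by apply: conn_edge_connect.
exact: connect_trans cXW (connect_trans cWU cUZ).
Qed.

Lemma temporal_path_step X Y Z U W :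
  conn_edge A lam X Y -> conn_edge A lam Z Y -> conn_edge A lam U Z ->
  conn_edge A lam W X -> conn_edge A lam U W ->
  ~ conn_edge A lam U Y -> ~ conn_edge A lam W Y -> Y != U -> Y != W ->
  temporal_path A lam X Y <-> temporal_path A lam Z Y.
Proof.
move=> hXY hZY hUZ hWX hUW nUY nWY hYU hYW.
split; apply: temporal_path_step_imp; eauto using conn_edge_sym.
Qed.

End TemporalPaths.

Section Anticycle.
Variables (V : finType) (E T : V -> V -> Prop).
Hypothesis E_T : forall u v, E u v -> T u v \/ T v u.
Hypothesis T_asym : forall u v, E u v -> T u v -> ~ T v u.
Hypothesis T_step : forall X Y Z U W, E X Y -> E Z Y -> E U Z -> E W X -> E U W ->
  ~ E U Y -> ~ E W Y -> Y != U -> Y != W -> (T X Y <-> T Z Y).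

Section Vertices.
Variables (m : nat) (f : 'I_m.+1 -> V).
Hypotheses (m_ge4 : 4 <= m) (f_inj : injective f)
  (f_anticycle : forall i j, i != j -> (E (f i) (f j) <-> ~~ cycle_adj i j)).

Let x (i : nat) : V := f (inord i).
Let next (i : nat) : nat := if i < m then i.+1 else 0.
Let anti_adj (i j : nat) : bool := [&& i != j, j != next i & i != next j].

Lemma anticycle_edge_iff i j : i <= m -> j <= m -> i != j ->
  E (x i) (x j) <-> anti_adj i j.
Proof.
move=> hi hj hij.
have next_mod k : k <= m -> k.+1 %% m.+1 = next k.
  rewrite /next; case: ltnP => [hk _|hk hkm]; first by rewrite modn_small.
  by rewrite (_ : k = m) ?modnn //; lia.
rewrite /anti_adj hij f_anticycle /cycle_adj ?inordK ?next_mod ?negb_or //.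
by apply: contra hij => /eqP /(congr1 val) /=; rewrite !inordK // => ->.
Qed.

Lemma anticycle_edge i j : i <= m -> j <= m -> anti_adj i j -> E (x i) (x j).
Proof. by move=> hi hj hij; apply/anticycle_edge_iff => //; case/and3P: hij. Qed.

Lemma anticycle_nonedge i j : i <= m -> j <= m -> i != j -> ~~ anti_adj i j ->
  ~ E (x i) (x j).
Proof. by move=> hi hj hij /negP nij /anticycle_edge_iff; auto. Qed.

Lemma anticycle_neq i j : i <= m -> j <= m -> i != j -> x i != x j.
Proof.
move=> hi hj; apply: contra => /eqP /f_inj /(congr1 val) /=.
by rewrite !inordK // => ->.
Qed.

Lemma anticycle_orient i j : i <= m -> j <= m -> anti_adj i j ->
  T (x i) (x j) <-> ~ T (x j) (x i).
Proof.
move=> hi hj /(anticycle_edge hi hj) hE.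
by split; [exact: T_asym|case: (E_T hE)].
Qed.

Lemma anticycle_step X Y Z U W :
  [&& X <= m, Y <= m, Z <= m, U <= m & W <= m] ->
  [&& anti_adj X Y, anti_adj Z Y, anti_adj U Z, anti_adj W X & anti_adj U W] ->
  U != Y -> W != Y -> ~~ anti_adj U Y -> ~~ anti_adj W Y ->
  T (x X) (x Y) <-> T (x Z) (x Y).
Proof.
move=> /and5P[hX hY hZ hU hW] /and5P[aXY aZY aUZ aWX aUW] hUY hWY nUY nWY.
apply: (T_step (U := x U) (W := x W)); rewrite ?anticycle_neq 1?eq_sym //;
  by [apply: anticycle_edge | apply: anticycle_nonedge].
Qed.

Ltac index_arith := rewrite /anti_adj /next; do ?case: ifP => ?; lia.

Lemma anticycle_contradiction : False.
Proof.
pose t i j := T (x i) (x j).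
have at0 : t 3 0 <-> t 2 0 by apply: (anticycle_step (U := m) (W := 1)); index_arith.
have at2 : t 0 2 <-> t 4 2 by apply: (anticycle_step (U := 1) (W := 3)); index_arith.
have at4 : t 2 4 <-> t 1 4 by apply: (anticycle_step (U := 3) (W := next 4)); index_arith.
have at1 : t 4 1 <-> t 3 1 by apply: (anticycle_step (U := 0) (W := 2)); index_arith.
have at3 : t 1 3 <-> t 0 3 by apply: (anticycle_step (U := 2) (W := 4)); index_arith.
have o02 : t 0 2 <-> ~ t 2 0 by apply: anticycle_orient; index_arith.
have o24 : t 2 4 <-> ~ t 4 2 by apply: anticycle_orient; index_arith.
have o41 : t 4 1 <-> ~ t 1 4 by apply: anticycle_orient; index_arith.
have o13 : t 1 3 <-> ~ t 3 1 by apply: anticycle_orient; index_arith.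
have o30 : t 3 0 <-> ~ t 0 3 by apply: anticycle_orient; index_arith.
clearbody t; tauto.
Qed.

End Vertices.

Lemma no_induced_anticycle m : 4 <= m -> ~ has_induced_anticycle E m.+1.
Proof.
by move=> hm [f [f_inj f_anticycle]]; exact: (anticycle_contradiction hm f_inj f_anticycle).
Qed.

End Anticycle.

Theorem mainTheorem12 (V : finType) (A : rel V) (tmax : nat)
    (lam : V -> V -> nat -> bool) :
  oriented_tree A -> temporal_labelling tmax lam ->
  forall k : nat, 5 <= k ->
    ~ has_induced_anticycle (conn_edge A lam) k.
Proof.
move=> [_ A_asym _ _ A_acyclic] _ [//|m] hm.
apply: (no_induced_anticycle (T := temporal_path A lam)) => //.
- by move=> u v [_].
- by move=> u v [huv _]; apply: temporal_path_asym.
- by move=> X Y Z U W; apply: temporal_path_step.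
Qed.
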